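(* Let $R$ be the ring of integers of a nonarchimedean local field $F$ of characteristic not $2$ in which $2$ is a prime element, and assume $R\ne\mathbb{Z}_2$. For any $n\ge 3$, the $R$-lattice $\mathbb{H}^{n-1}\perp\langle 1,-1\rangle$ is primitively $n$-universal. In particular, $u^\ast_R(n) = 2n$ for any $n\ge 3$.
   Context: An $R$-lattice is a finitely generated $R$-submodule of a quadratic space $(V,B)$ over $F$, assumed integral ($B(L,L)\subseteq R$) and nondegenerate. A representation is an $R$-linear map preserving $B$; it is primitive if its image is a direct summand. A lattice is primitively $n$-universal if it primitively represents every $R$-lattice of rank $n$; $u^\ast_R(n)$ is the minimal rank of such a lattice. $\mathbb{H}$ is the binary lattice with Gram matrix $\begin{pmatrix}0&1\\1&0\end{pmatrix}$, $\mathbb{H}^{k}$ the orthogonal sum of $k$ copies, and $\langle a_1,\dots,a_k\rangle$ the lattice with diagonal Gram matrix $\operatorname{diag}(a_1,\dots,a_k)$. *)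

From HB Require Import structures.
From mathcomp Require Import all_boot all_order all_algebra.
Set Implicit Arguments. Unset Strict Implicit. Unset Printing Implicit Defensive.
Import Order.TTheory GRing.Theory Num.Theory.
Local Open Scope ring_scope.

Definition dvdR (R : comRingType) (a b : R) : Prop := exists c : R, b = a * c.

(* R is the ring of integers of a nonarchimedean local field F = Frac R
   of characteristic not 2 in which 2 is a prime element (uniformizer):
   - 2 <> 0 in R  (char F <> 2; F is the fraction field of the domain R)
   - 2 is not a unit, and every nonzero element is a unit times a power of 2
     (R is a discrete valuation ring with uniformizer 2)
   - R is complete for the 2-adic topology
   - the residue field R/2R is finite. *)
Definition local_ring_of_integers_2prime (R : idomainType) : Prop :=
  [/\ (2 : R) != 0,
      (2 : R) \isn't a GRing.unit,
      (forall x : R, x != 0 ->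
         exists (k : nat) (u : R), u \is a GRing.unit /\ x = u * 2 ^+ k),
      (forall a : nat -> R, (forall n, dvdR (2 ^+ n) (a n.+1 - a n)) ->
         exists l : R, forall n, dvdR (2 ^+ n) (l - a n)) &
      (exists s : seq R, forall x : R, exists2 r, r \in s & dvdR 2 (x - r))].

(* R <> Z_2: for such R (unramified over Z_2) this means the residue
   field R/2R is not F_2, i.e. some residue class is neither 0 nor 1. *)
Definition not_Z2 (R : idomainType) : Prop :=
  exists x : R, ~ dvdR 2 x /\ ~ dvdR 2 (x - 1).

(* An R-lattice of rank m, given by its Gram matrix w.r.t. a basis
   (over a DVR every lattice is free): symmetric, entries in R (integral),
   nondegenerate. *)
Definition lattice (R : idomainType) (m : nat) (G : 'M[R]_m) : Prop :=
  G^T = G /\ \det G != 0.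

(* A representation of L (Gram G, rank n) by M (Gram M, rank m):
   an R-linear map R^n -> R^m, v |-> v *m X, preserving B. It is primitive
   iff its image is a direct summand, i.e. the map is split injective:
   there is Y with X *m Y = 1. *)
Definition represents (R : idomainType) (n m : nat) (G : 'M[R]_n) (M : 'M[R]_m)
  (X : 'M[R]_(n, m)) : Prop := X *m M *m X^T = G.

Definition prim_represents (R : idomainType) (n m : nat) (G : 'M[R]_n)
  (M : 'M[R]_m) : Prop :=
  exists X : 'M[R]_(n, m),
    represents G M X /\ exists Y : 'M[R]_(m, n), X *m Y = 1%:M.

Definition prim_n_universal (R : idomainType) (n m : nat) (M : 'M[R]_m) : Prop :=
  forall G : 'M[R]_n, lattice G -> prim_represents G M.

Definition u_star_eq (R : idomainType) (n k : nat) : Prop :=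
  (exists M : 'M[R]_k, lattice M /\ prim_n_universal n M) /\
  (forall (m : nat) (M : 'M[R]_m), lattice M -> prim_n_universal n M -> (k <= m)%N).

Definition Hplane (R : idomainType) : 'M[R]_2 :=
  \matrix_(i < 2, j < 2) (if i == j then 0 else 1).

Definition orth (R : idomainType) (a b : nat) (A : 'M[R]_a) (B : 'M[R]_b)
  : 'M[R]_(a + b) := block_mx A 0 0 B.

Fixpoint Hpow (R : idomainType) (k : nat) : 'M[R]_(k.*2) :=
  match k return 'M[R]_(k.*2) with
  | 0 => 0
  | k'.+1 => orth (Hplane R) (Hpow R k')
  end.

Definition diag2 (R : idomainType) (a b : R) : 'M[R]_2 :=
  \matrix_(i < 2, j < 2) (if i == j then (if i == 0 then a else b) else 0).

(* For a Gram matrix G of rank n >= 3 there is a vector v with a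
   unit coordinate such that Q(v) is a unit or divisible by 4: if every G_ii is
   even, an even ternary form has such a zero modulo 4, because squaring is onto
   the finite residue field.  Such a Q(v) is p^2 - q^2 with p or q a unit (here
   R <> Z_2 is used).  Make v the first basis vector and subtract
   (p, r)(p, r)^T - (q, 0)(q, 0)^T, where r_i^2 = G_ii mod 2: what remains has a
   zero corner and an even diagonal, hence is A C^T + C A^T with A the inclusion
   of the last n - 1 coordinates, and this is represented by H^(n-1).  The unit
   p or q makes the representation primitive.

   Minimality.  If X represents (2 det M) I_n primitively, X Y = 1, then
   C = (X^T | adj(M) Y) satisfies C^T M C = det M [[2, 1], [1, Z]], whose
   determinant is a unit modulo 2; so 2n <= rank M. *)

From HB Require Import structures.
From mathcomp Require Import all_boot all_order all_algebra.
From mathcomp Require Import perm fraction ring boolp.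
Set Implicit Arguments. Unset Strict Implicit. Unset Printing Implicit Defensive.
Import Order.TTheory GRing.Theory Num.Theory.
Local Open Scope ring_scope.

Section Divisibility.
Variable R : comNzRingType.
Implicit Types a b x y : R.

Lemma dvdR0 a : dvdR a 0. Proof. by exists 0; rewrite mulr0. Qed.
Lemma dvdRR a : dvdR a a. Proof. by exists 1; rewrite mulr1. Qed.

Lemma dvdRD a x y : dvdR a x -> dvdR a y -> dvdR a (x + y).
Proof. by move=> [c ->] [d ->]; exists (c + d); rewrite mulrDr. Qed.

Lemma dvdRN a x : dvdR a x -> dvdR a (- x).
Proof. by move=> [c ->]; exists (- c); rewrite mulrN. Qed.

Lemma dvdRB a x y : dvdR a x -> dvdR a y -> dvdR a (x - y).
Proof. by move=> ax ay; apply/dvdRD/dvdRN. Qed.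

Lemma dvdR_mull a x y : dvdR a x -> dvdR a (y * x).
Proof. by move=> [c ->]; exists (y * c); rewrite mulrCA. Qed.

Lemma dvdR_mulr a x y : dvdR a x -> dvdR a (x * y).
Proof. by rewrite mulrC; apply: dvdR_mull. Qed.

Lemma dvdR_mul a b x y : dvdR a x -> dvdR b y -> dvdR (a * b) (x * y).
Proof. by move=> [c ->] [d ->]; exists (c * d); rewrite mulrACA. Qed.

End Divisibility.

Lemma unit_ndvdR (R : comUnitRingType) (a x : R) :
  a \isn't a GRing.unit -> x \is a GRing.unit -> ~ dvdR a x.
Proof.
move=> /negP a_nunit x_unit [c xE]; apply: a_nunit; apply/unitrP.
by exists (c / x); rewrite mulrAC (mulrC c) mulrA -xE divrr.
Qed.

Lemma unit_dvdR (R : comUnitRingType) (t x : R) : t \is a GRing.unit -> dvdR t x.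
Proof. by move=> t_unit; exists (t^-1 * x); rewrite mulVKr. Qed.

Lemma classes_inj_onto (T : eqType) (e : rel T) (s : seq T) (g : T -> T) :
  equivalence_rel e -> (forall x, has (e x) s) ->
  (forall a b, e (g a) (g b) -> e a b) -> forall x, exists a, e x (g a).
Proof.
move=> /equivalence_relP[e_refl e_ltr] s_cover g_inj x.
have e_sym y z : e y z -> e z y by move=> /e_ltr <-; apply: e_refl.
pose r y := nth y s (find (e y) s).
have e_r y : e y (r y) by apply: nth_find.
have r_eq y z : e y z -> r y = r z.
  by move=> /e_ltr yz; rewrite /r (eq_find yz); apply: set_nth_default; rewrite -has_find.
pose C := undup (map r s).
have rC y : r y \in C.
  by rewrite mem_undup (r_eq _ _ (e_r y)); apply: map_f; rewrite mem_nth // -has_find.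
have rK y : y \in C -> r y = y.
  by rewrite mem_undup => /mapP[z _ ->]; apply/esym/r_eq/e_r.
have h_inj : {in C &, injective (r \o g)}.
  move=> a b aC bC /= rg; rewrite -(rK a aC) -(rK b bC); apply/r_eq/g_inj.
  by rewrite (e_ltr _ _ (e_r (g a))) rg; apply/e_sym/e_r.
have [_ /(_ (r x))] : ((size (map (r \o g) C) = size C) * (map (r \o g) C =i C))%type.
  apply: uniq_min_size; last by rewrite size_map.
    by rewrite (map_inj_in_uniq h_inj) undup_uniq.
  by move=> _ /mapP[y _ ->]; apply: rC.
rewrite rC => /mapP[a _ /= rx]; exists a.
by rewrite (e_ltr _ _ (e_r x)) rx; apply/e_sym/e_r.
Qed.

Section BilinearForm.
Variables (R : comNzRingType) (n : nat) (G : 'M[R]_n).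
Implicit Types v w : 'rV[R]_n.

Definition bform v w : R := (v *m G *m w^T) 0 0.

Lemma bformDl v1 v2 w : bform (v1 + v2) w = bform v1 w + bform v2 w.
Proof. by rewrite /bform !mulmxDl mxE. Qed.

Lemma bformDr v w1 w2 : bform v (w1 + w2) = bform v w1 + bform v w2.
Proof. by rewrite /bform linearD /= mulmxDr mxE. Qed.

Lemma bformZl c v w : bform (c *: v) w = c * bform v w.
Proof. by rewrite /bform -!scalemxAl mxE. Qed.

Lemma bformZr c v w : bform v (c *: w) = c * bform v w.
Proof. by rewrite /bform linearZ /= -scalemxAr mxE. Qed.

Lemma bform_delta i j : bform (delta_mx 0 i) (delta_mx 0 j) = G i j.
Proof. by rewrite /bform -rowE trmx_delta -colE !mxE. Qed.

Lemma mulmx_tr_diag k (A : 'M[R]_(k, n)) i :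
  (A *m G *m A^T) i i = bform (row i A) (row i A).
Proof. by rewrite /bform tr_row colE mulmxA -colE -!row_mul !mxE. Qed.

End BilinearForm.

Lemma mul_hsubmx (R : pzSemiRingType) p k1 k2 r
    (A : 'M[R]_(p, k1 + k2)) (B : 'M[R]_(k1 + k2, r)) :
  A *m B = lsubmx A *m usubmx B + rsubmx A *m dsubmx B.
Proof. by rewrite -mul_row_col hsubmxK vsubmxK. Qed.

Lemma prim_represents_basis_change (R : idomainType) m n (G P Q : 'M[R]_n) (M : 'M[R]_m) :
  Q *m P = 1%:M -> prim_represents (P *m G *m P^T) M -> prim_represents G M.
Proof.
move=> QP [X [XMX [Y XY]]]; exists (Q *m X); split.
  rewrite /represents trmx_mul !mulmxA -(mulmxA Q X) -(mulmxA Q (X *m M)) XMX.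
  by rewrite !mulmxA QP mul1mx -mulmxA -trmx_mul QP trmx1 mulmx1.
by exists (Y *m P); rewrite mulmxA -(mulmxA Q) XY mulmx1 QP.
Qed.

(** [P] is the transvection [1 + e_j (v - e_j)] followed by the transposition
    [(j 0)]; the transvection has the explicit inverse
    [1 - v_j^-1 e_j (v - e_j)]. *)
Lemma exists_basis_row0 (R : comUnitRingType) n (v : 'rV[R]_n.+1) j :
  v 0 j \is a GRing.unit -> exists P Q : 'M[R]_n.+1, Q *m P = 1%:M /\ row 0 P = v.
Proof.
move=> vj_unit.
pose u : 'cV[R]_n.+1 := delta_mx j 0; pose w := v - delta_mx 0 j.
pose S := 1%:M + u *m w; pose Si := 1%:M - (v 0 j)^-1 *: (u *m w).
have wu : w *m u = (v 0 j - 1)%:M.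
  apply/matrixP => a b; rewrite !ord1 !mxE (bigD1 j) //= big1 => [|k /negPf kj].
    by rewrite !mxE !eqxx /= mulr1 addr0 mulr1n.
  by rewrite !mxE kj andbF mulr0.
have SiS : Si *m S = 1%:M.
  rewrite mulmxDr mulmx1 mulmxBl mul1mx -scalemxAl mulmxA -(mulmxA u) wu.
  rewrite mul_mx_scalar -scalemxAl scalerA mulrBr mulr1 mulVr // scalerBl scale1r.
  by rewrite subKr subrK.
pose T : 'M[R]_n.+1 := tperm_mx j 0.
have TT : T *m T = 1%:M by rewrite -perm_mxM tperm2 perm_mx1.
exists (T *m S), (Si *m T); split; first by rewrite mulmxA -(mulmxA Si) TT mulmx1.
apply/rowP => k; rewrite -xrowE !mxE tpermR big_ord1 !mxE !eqxx /=.
by rewrite eq_sym mul1r addrC subrK.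
Qed.

Section HyperbolicSpace.
Variable R : idomainType.

Lemma Hplane_block : Hplane R = block_mx 0 1%:M 1%:M 0 :> 'M_(1 + 1).
Proof.
apply/matrixP => i j; rewrite -[i]splitK -[j]splitK.
by case: (split i) => i'; case: (split j) => j';
  rewrite ?(block_mxEul, block_mxEur, block_mxEdl, block_mxEdr) !mxE !ord1.
Qed.

Lemma Hplane_mul p (a c : 'cV[R]_p) : row_mx a c *m Hplane R = row_mx c a.
Proof. by rewrite Hplane_block (@mul_row_block _ p 1 1 1 1) !mulmx0 !mulmx1 addr0 add0r. Qed.

Lemma diag2_block (a b : R) : diag2 a b = block_mx a%:M 0 0 b%:M :> 'M_(1 + 1).
Proof.
apply/matrixP => i j; rewrite -[i]splitK -[j]splitK.
by case: (split i) => i'; case: (split j) => j';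
  rewrite ?(block_mxEul, block_mxEur, block_mxEdl, block_mxEdr) !mxE !ord1.
Qed.

Lemma orth_form p q k1 k2 (X1 : 'M[R]_(p, k1)) (X2 : 'M[R]_(p, k2))
    (Y1 : 'M[R]_(q, k1)) (Y2 : 'M[R]_(q, k2)) (A : 'M[R]_k1) (B : 'M[R]_k2) :
  row_mx X1 X2 *m orth A B *m (row_mx Y1 Y2)^T = X1 *m A *m Y1^T + X2 *m B *m Y2^T.
Proof. by rewrite mul_row_block !mulmx0 addr0 add0r tr_row_mx mul_row_col. Qed.

(** The columns of [hyp_cols A C] are those of [A] and [C], interleaved so that
    the [i]-th columns of [A] and [C] face the [i]-th hyperbolic plane of [H^k];
    [hyp_rows] interleaves rows in the same way. *)
Fixpoint hyp_cols p k : 'M[R]_(p, k) -> 'M[R]_(p, k) -> 'M[R]_(p, k.*2) :=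
  match k with
  | 0 => fun _ _ => 0
  | k'.+1 => fun A C =>
      row_mx (row_mx (lsubmx (A : 'M_(p, 1 + k'))) (lsubmx (C : 'M_(p, 1 + k'))) : 'M_(p, 2))
             (hyp_cols (rsubmx (A : 'M_(p, 1 + k'))) (rsubmx (C : 'M_(p, 1 + k'))))
  end.

Fixpoint hyp_rows r k : 'M[R]_(k, r) -> 'M[R]_(k, r) -> 'M[R]_(k.*2, r) :=
  match k with
  | 0 => fun _ _ => 0
  | k'.+1 => fun A C =>
      col_mx (col_mx (usubmx (A : 'M_(1 + k', r))) (usubmx (C : 'M_(1 + k', r))) : 'M_(2, r))
             (hyp_rows (dsubmx (A : 'M_(1 + k', r))) (dsubmx (C : 'M_(1 + k', r))))
  end.

Lemma hyp_cols_Hpow p q k (A C : 'M[R]_(p, k)) (A' C' : 'M[R]_(q, k)) :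
  hyp_cols A C *m Hpow R k *m (hyp_cols A' C')^T = A *m C'^T + C *m A'^T.
Proof.
elim: k A C A' C' => [|k IH] A C A' C' /=.
  by rewrite !mul0mx (thinmx0 A) (thinmx0 C) !mul0mx addr0.
rewrite (@orth_form p q 2 k.*2) IH Hplane_mul.
rewrite (@tr_row_mx _ q 1 1) (@mul_row_col _ p 1 1 q).
rewrite (mul_hsubmx (A : 'M_(p, 1 + k))) (mul_hsubmx (C : 'M_(p, 1 + k))).
by rewrite [X in X + _ = _]addrC addrACA !trmx_lsub !trmx_rsub.
Qed.

Lemma hyp_cols_mul p r k (A C : 'M[R]_(p, k)) (Ya Yc : 'M[R]_(k, r)) :
  hyp_cols A C *m hyp_rows Ya Yc = A *m Ya + C *m Yc.
Proof.
elim: k A C Ya Yc => [|k IH] A C Ya Yc /=.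
  by rewrite mul0mx (thinmx0 A) (thinmx0 C) !mul0mx addr0.
rewrite (@mul_row_col _ p 2 k.*2) (@mul_row_col _ p 1 1) IH.
by rewrite (mul_hsubmx (A : 'M_(p, 1 + k))) (mul_hsubmx (C : 'M_(p, 1 + k))) addrACA.
Qed.

Lemma represents_hyp_cols m p (A C : 'M[R]_(p, m)) (a c : 'cV[R]_p) :
  represents (A *m C^T + C *m A^T + (a *m a^T - c *m c^T))
    (orth (Hpow R m) (diag2 1 (-1))) (row_mx (hyp_cols A C) (row_mx a c)).
Proof.
rewrite /represents (@orth_form p p m.*2 2) hyp_cols_Hpow diag2_block.
by rewrite (@orth_form p p 1 1) !mul_mx_scalar scale1r scaleN1r mulNmx.
Qed.

Lemma exists_col_complement m (z : 'cV[R]_(1 + m)) : z 0 0 \is a GRing.unit ->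
  exists (Y : 'M[R]_(m, 1 + m)) (y : 'rV[R]_(1 + m)), col_mx 0 1%:M *m Y + z *m y = 1%:M.
Proof.
move=> z_unit; pose u := (z 0 0)^-1.
exists (row_mx (- (u *: dsubmx z)) 1%:M), (row_mx u%:M 0).
have zu : usubmx z = (z 0 0)%:M.
  by rewrite [LHS]mx11_scalar mxE; congr (z _ _)%:M; apply: val_inj.
rewrite -{2}(vsubmxK z) !mul_col_mx mul0mx mul1mx !mul_mx_row !mulmx0 zu.
rewrite !mul_mx_scalar scale_scalar_mx /u mulVr // add_col_mx !add_row_mx.
by rewrite !addr0 add0r addNr scalar_mx_block.
Qed.

Lemma prim_represents_hyp_cols m (G : 'M[R]_(1 + m)) (C : 'M[R]_(1 + m, m))
    (a c : 'cV[R]_(1 + m)) :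
  let A := col_mx 0 1%:M in
  G = A *m C^T + C *m A^T + (a *m a^T - c *m c^T) ->
  a 0 0 \is a GRing.unit \/ c 0 0 \is a GRing.unit ->
  prim_represents G (orth (Hpow R m) (diag2 1 (-1))).
Proof.
move=> A -> a_or_c_unit; exists (row_mx (hyp_cols A C) (row_mx a c)).
split; first exact: represents_hyp_cols.
case: a_or_c_unit => /exists_col_complement[Y [y AYy]].
  exists (col_mx (hyp_rows Y 0) (col_mx y 0)).
  by rewrite mul_row_col hyp_cols_mul (@mul_row_col _ _ 1 1) !mulmx0 !addr0.
exists (col_mx (hyp_rows Y 0) (col_mx (0 : 'rV_(1 + m)) y)).
by rewrite mul_row_col hyp_cols_mul (@mul_row_col _ _ 1 1) !mulmx0 !addr0 add0r.
Qed.

Lemma sym_dvd2_diag_split m (E : 'M[R]_m) : E^T = E -> (forall i, dvdR 2 (E i i)) ->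
  exists D, E = D + D^T.
Proof.
move=> E_sym /fin_all_exists[h Eii].
exists (\matrix_(i, j) if (i < j)%N then E i j else if i == j :> nat then h i else 0).
apply/matrixP => i j; rewrite !mxE.
case: ltngtP => [_ | _ | /val_inj <-]; rewrite ?addr0 ?add0r //.
  by rewrite -{1}E_sym mxE.
by rewrite Eii mulr_natl mulr2n.
Qed.

Lemma exists_hyp_split m (G : 'M[R]_(1 + m)) :
  G^T = G -> G 0 0 = 0 -> (forall i, dvdR 2 (G i i)) ->
  exists C : 'M[R]_(1 + m, m), G = col_mx 0 1%:M *m C^T + C *m (col_mx 0 1%:M)^T.
Proof.
move=> G_sym G00 G_even.
have [D DE] : exists D, drsubmx G = D + D^T.
  by apply: sym_dvd2_diag_split => [|i]; rewrite ?trmx_drsub ?G_sym // !mxE; apply: G_even.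
exists (col_mx (ursubmx G) D^T).
rewrite !tr_col_mx trmxK trmx0 trmx1 !mul_col_row !mul0mx !mulmx0 !mul1mx !mulmx1.
rewrite add_block_mx !addr0 !add0r -DE trmx_ursub G_sym -[LHS]submxK; congr block_mx.
by apply/rowP => i; rewrite !ord1 !mxE -G00; congr (G _ _); apply: val_inj.
Qed.

Lemma orth_sym a b (A : 'M[R]_a) (B : 'M[R]_b) :
  A^T = A -> B^T = B -> (orth A B)^T = orth A B.
Proof. by move=> A_sym B_sym; rewrite /orth tr_block_mx A_sym B_sym !trmx0. Qed.

Lemma Hpow_sym k : (Hpow R k)^T = Hpow R k.
Proof.
elim: k => [|k IH] /=; first by rewrite trmx0.
by apply: (@orth_sym 2 k.*2) IH; apply/matrixP => i j; rewrite !mxE eq_sym.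
Qed.

Lemma det_Hpow k : \det (Hpow R k) = (-1) ^+ k.
Proof.
elim: k => [|k IH] /=; first by rewrite det_mx00.
rewrite /orth (@det_ublock _ 2) IH exprS; congr (_ * _).
by rewrite (expand_det_row _ 0) big_ord_recl big_ord1 /cofactor !det_mx11 !mxE /=; ring.
Qed.

Lemma lattice_Hpow_diag2 k : lattice (orth (Hpow R k) (diag2 1 (-1))).
Proof.
split.
  apply: orth_sym (Hpow_sym k) _; apply/matrixP => i j; rewrite !mxE eq_sym.
  by case: eqP => // ->.
rewrite /orth det_ublock det_Hpow diag2_block (@det_ublock _ 1 1) !det_scalar1 mul1r -exprSr.
by rewrite expf_eq0 oppr_eq0 oner_eq0 andbF.
Qed.

End HyperbolicSpace.

Lemma dvdR_det_congr (R : comNzRingType) k (A B F : 'M[R]_k) (d : R) :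
  A = B + d *: F -> dvdR d (\det A - \det B).
Proof.
move=> ->; pose congr_d x y := dvdR d (x - y).
have congr_refl x : congr_d x x by rewrite /congr_d subrr; apply: dvdR0.
have congrD x1 x2 y1 y2 : congr_d x1 x2 -> congr_d y1 y2 -> congr_d (x1 + y1) (x2 + y2).
  by move=> ? ?; rewrite /congr_d opprD addrACA; apply: dvdRD.
have congrM x1 x2 y1 y2 : congr_d x1 x2 -> congr_d y1 y2 -> congr_d (x1 * y1) (x2 * y2).
  rewrite /congr_d => ? ?.
  have -> : x1 * y1 - x2 * y2 = x1 * (y1 - y2) + (x1 - x2) * y2 by ring.
  by apply: dvdRD; [apply: dvdR_mull | apply: dvdR_mulr].
rewrite /determinant.
apply: (big_ind2 congr_d) => [|x1 x2 y1 y2 | s _]; [exact: congr_refl | exact: congrD |].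
apply: (congrM _ _ _ _ (congr_refl _)).
apply: (big_ind2 congr_d) => [|x1 x2 y1 y2 | i _]; [exact: congr_refl | exact: congrM |].
by rewrite /congr_d !mxE addrAC subrr add0r; exists (F i (s i)).
Qed.

Lemma block_swap_unitmx (R : comUnitRingType) n (Z : 'M[R]_n) :
  block_mx 0 1%:M 1%:M Z \in unitmx.
Proof.
suff /mulmx1_unit[] : block_mx 0 1%:M 1%:M Z *m block_mx (- Z) 1%:M 1%:M 0 = 1%:M by [].
by rewrite mulmx_block !mul0mx !mul1mx !mulmx1 !mulmx0 !add0r !addr0 addNr -scalar_mx_block.
Qed.

Lemma leq_of_det_mulmx_neq0 (R : idomainType) k m (A : 'M[R]_(k, m)) (B : 'M[R]_(m, k)) :
  \det (A *m B) != 0 -> (k <= m)%N.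
Proof.
move=> det_neq0; pose f := @tofrac R.
have <- : \rank (map_mx f (A *m B)) = k.
  by apply: mxrank_unit; rewrite unitmxE det_map_mx unitfE tofrac_eq0.
by rewrite map_mxM; apply: leq_trans (mxrankM_maxl _ _) (rank_leq_col _).
Qed.

Lemma prim_n_universal_rank (R : idomainType) n m (M : 'M[R]_m) :
  (2 : R) != 0 -> (2 : R) \isn't a GRing.unit ->
  lattice M -> prim_n_universal n M -> (n + n <= m)%N.
Proof.
move=> two_neq0 two_nunit [M_sym detM_neq0] M_univ.
set d := \det M in detM_neq0.
have [X [XMX [Y XY]]] : prim_represents ((2 * d)%:M : 'M_n) M.
  by apply: M_univ; split; rewrite ?tr_scalar_mx // det_scalar expf_neq0 // mulf_neq0.
pose N := \adj M; pose Z := Y^T *m N *m Y; pose C := row_mx X^T (N *m Y).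
have CMC : C^T *m M *m C = d *: block_mx 2%:M 1%:M 1%:M Z.
  have NM : N *m M = d%:M by apply: mul_adj_mx.
  have MN : M *m N = d%:M by apply: mul_mx_adj.
  have N_sym : N^T = N by rewrite /N trmx_adj M_sym.
  have XMNY : X *m M *m (N *m Y) = d%:M.
    by rewrite -mulmxA (mulmxA M) MN mul_scalar_mx -scalemxAr XY scalemx1.
  have YNMX : Y^T *m N *m M *m X^T = d%:M.
    by rewrite -(mulmxA _ N) NM mul_mx_scalar -scalemxAl -trmx_mul XY trmx1 scalemx1.
  have YNMNY : Y^T *m N *m M *m (N *m Y) = d *: Z.
    by rewrite -(mulmxA _ N) NM mul_mx_scalar -scalemxAl /Z mulmxA.
  rewrite tr_row_mx trmxK trmx_mul N_sym mul_col_mx mul_col_row XMNY YNMX YNMNY.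
  by rewrite [X *m M *m X^T]XMX scale_block_mx !scale_scalar_mx !mulr1 mulrC.
apply: (@leq_of_det_mulmx_neq0 _ _ _ (C^T *m M) C).
rewrite CMC detZ mulf_neq0 ?expf_neq0 //.
apply/eqP => det0.
have : dvdR 2 (\det (block_mx 2%:M 1%:M 1%:M Z) - \det (block_mx 0 1%:M 1%:M Z)).
  apply: (dvdR_det_congr (F := block_mx 1%:M 0 0 0)).
  by rewrite scale_block_mx add_block_mx !scaler0 !addr0 add0r scalemx1.
rewrite det0 sub0r => /dvdRN; rewrite opprK.
by apply: unit_ndvdR two_nunit _; rewrite -unitmxE; apply: block_swap_unitmx.
Qed.

Section TwoPrimeRing.
Variable R : idomainType.
Hypothesis HR : local_ring_of_integers_2prime R.
Implicit Types x y z l : R.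

Lemma two_nonunit : (2 : R) \isn't a GRing.unit. Proof. by case: HR. Qed.

Lemma unit_ndvd2 x : x \is a GRing.unit -> ~ dvdR 2 x.
Proof. exact: unit_ndvdR two_nonunit. Qed.

Lemma ndvd2_1 : ~ dvdR 2 (1 : R). Proof. exact/unit_ndvd2/unitr1. Qed.

Lemma ndvd2_1D x : dvdR 2 x -> ~ dvdR 2 (1 + x).
Proof. by move=> x_even /dvdRB /(_ x_even); rewrite addrK; apply: ndvd2_1. Qed.

Lemma ndvd2_unit x : ~ dvdR 2 x -> x \is a GRing.unit.
Proof.
case: HR => _ _ x_val _ _ x_odd.
have x_neq0 : x != 0 by apply: contra_notN x_odd => /eqP->; apply: dvdR0.
have [[|k] [u [u_unit xE]]] := x_val x x_neq0; first by rewrite xE expr0 mulr1.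
by case: x_odd; rewrite xE exprS mulrCA; exists (u * 2 ^+ k).
Qed.

Lemma ndvd2M x y : ~ dvdR 2 x -> ~ dvdR 2 y -> ~ dvdR 2 (x * y).
Proof.
by move=> /ndvd2_unit x_unit /ndvd2_unit y_unit; apply: unit_ndvd2; rewrite unitrM x_unit.
Qed.

Lemma dvd2M x y : dvdR 2 (x * y) -> dvdR 2 x \/ dvdR 2 y.
Proof.
move=> xy_even; have [|x_odd] := EM (dvdR 2 x); first by left.
by have [|y_odd] := EM (dvdR 2 y); [right | case: (ndvd2M x_odd y_odd)].
Qed.

Lemma ndvd2_sqr_congr x y : dvdR 2 (x - y ^+ 2) -> ~ dvdR 2 x -> ~ dvdR 2 y.
Proof.
move=> xy2 x_odd y_even; apply: x_odd; rewrite -(subrK (y ^+ 2) x).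
by apply: dvdRD xy2 _; rewrite expr2; apply: dvdR_mulr.
Qed.

(** The residue field [R/2R] is finite of characteristic 2, so its Frobenius
    map, being injective, is onto. *)
Lemma exists_sqrt_mod2 x : exists y, dvdR 2 (x - y ^+ 2).
Proof.
case: HR => _ _ _ _ [s s_cover].
pose e : rel R := fun a b => `[< dvdR 2 (a - b) >].
have e_equiv : equivalence_rel e.
  apply/equivalence_relP; split=> [a | a b /asboolP ab c].
    by apply/asboolP; rewrite subrr; apply: dvdR0.
  apply/asboolP/asboolP => [ac | bc]; last by rewrite -(subrKA b); apply: dvdRD.
  by rewrite -(subrKA a); apply: dvdRD _ ac; rewrite -opprB; apply: dvdRN.
have e_cover a : has (e a) s.
  by have [r r_s ar] := s_cover a; apply/hasP; exists r => //; apply/asboolP.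
have sqr_inj a b : e (a ^+ 2) (b ^+ 2) -> e a b.
  move=> /asboolP ab2; apply/asboolP.
  have : dvdR 2 ((a - b) * (a - b)).
    have -> : (a - b) * (a - b) = (a ^+ 2 - b ^+ 2) - 2 * (b * (a - b)) by ring.
    by apply: dvdRB ab2 _; exists (b * (a - b)).
  by case/dvd2M.
have [y /asboolP xy] := classes_inj_onto e_equiv e_cover sqr_inj x.
by exists y.
Qed.

Lemma exists_dvd4_pencil (qv qw b : R) :
  dvdR 2 qv -> dvdR 2 qw -> dvdR 2 b -> ~ dvdR 4 qw ->
  exists l, dvdR 4 (qv + l ^+ 2 * qw + 2 * l * b).
Proof.
move=> [h ->] [r qwE] [c ->] qw_n4; rewrite qwE in qw_n4 *.
have r_unit : r \is a GRing.unit.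
  by apply: ndvd2_unit => -[k rE]; apply: qw_n4; exists k; rewrite rE mulrA -natrM.
have [l hl] := exists_sqrt_mod2 (- h / r); exists l.
have -> : 2 * h + l ^+ 2 * (2 * r) + 2 * l * (2 * c) =
    2 * (r * (l ^+ 2 - - h / r)) + 2 * (h * (1 - r / r)) + 4 * (l * c) by ring.
rewrite divrr // subrr mulr0 mulr0 addr0; apply: dvdRD; last by exists (l * c).
have -> : (4 : R) = 2 * 2 by ring.
by apply: dvdR_mul (dvdRR 2) _; apply: dvdR_mull; rewrite -opprB; apply: dvdRN.
Qed.

Definition primitive3 x y z := ~ dvdR 2 x \/ ~ dvdR 2 y \/ ~ dvdR 2 z.

Section TernaryForm.
Variables a b c d e f : R.

Definition tern_form x y z :=
  a * x ^+ 2 + b * y ^+ 2 + c * z ^+ 2 + 2 * (d * x * y + e * x * z + f * y * z).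

Definition tern_polar x y z x' y' z' :=
  a * x * x' + b * y * y' + c * z * z' +
  d * (x * y' + x' * y) + e * (x * z' + x' * z) + f * (y * z' + y' * z).

Lemma tern_pencil_dvd4 x y z x' y' z' :
  dvdR 2 (tern_form x y z) -> dvdR 2 (tern_form x' y' z') ->
  dvdR 2 (tern_polar x y z x' y' z') -> primitive3 x' y' z' ->
  (forall l, primitive3 (x + l * x') (y + l * y') (z + l * z')) ->
  exists x1 y1 z1, primitive3 x1 y1 z1 /\ dvdR 4 (tern_form x1 y1 z1).
Proof.
move=> qv qw bvw w_prim pencil_prim.
have [|w_n4] := EM (dvdR 4 (tern_form x' y' z')); first by exists x', y', z'.
have [l hl] := exists_dvd4_pencil qv qw bvw w_n4.
exists (x + l * x'), (y + l * y'), (z + l * z'); split => //.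
suff -> : tern_form (x + l * x') (y + l * y') (z + l * z') =
   tern_form x y z + l ^+ 2 * tern_form x' y' z' + 2 * l * tern_polar x y z x' y' z' by [].
by rewrite /tern_form /tern_polar; ring.
Qed.

(** Modulo 2 the polar form has Gram matrix [[0,d,e],[d,0,f],[e,f,0]], whose
    kernel contains [(f,e,d)]; this vector is paired with a suitable coordinate
    vector (when [d], [e], [f] are all even, two coordinate vectors will do). *)
Lemma tern_even_dvd4 : dvdR 2 a -> dvdR 2 b -> dvdR 2 c ->
  exists x y z, primitive3 x y z /\ dvdR 4 (tern_form x y z).
Proof.
move=> [a' aE] [b' bE] [c' cE].
have q_rad : dvdR 2 (tern_form f e d).
  exists (a' * f ^+ 2 + b' * e ^+ 2 + c' * d ^+ 2 + (d * f * e + e * f * d + f * e * d)).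
  by rewrite /tern_form aE bE cE; ring.
have [f_even | f_odd] := EM (dvdR 2 f).
  have [[e_even d_even] | ed_odd] := EM (dvdR 2 e /\ dvdR 2 d).
    apply: (@tern_pencil_dvd4 1 0 0 0 1 0).
    - by exists a'; rewrite /tern_form aE; ring.
    - by exists b'; rewrite /tern_form bE; ring.
    - by have [k dE] := d_even; exists k; rewrite /tern_polar dE; ring.
    - by right; left; apply: ndvd2_1.
    - by move=> l; left; rewrite mulr0 addr0; apply: ndvd2_1.
  apply: (@tern_pencil_dvd4 1 0 0 f e d) => //.
  - by exists a'; rewrite /tern_form aE; ring.
  - by exists (a' * f + d * e); rewrite /tern_polar aE; ring.
  - by right; have [e_even|] := EM (dvdR 2 e); [right => d_even; apply: ed_odd | left].
  move=> l; have [l_even | l_odd] := EM (dvdR 2 l).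
    by left; apply/ndvd2_1D/dvdR_mulr.
  right; rewrite !add0r; have [e_even|] := EM (dvdR 2 e); [right | left]; last exact: ndvd2M.
  by apply: ndvd2M => // d_even; apply: ed_odd.
apply: (@tern_pencil_dvd4 0 1 0 f e d) => //.
- by exists b'; rewrite /tern_form bE; ring.
- by exists (b' * e + d * f); rewrite /tern_polar bE; ring.
- by left.
move=> l; have [l_even | l_odd] := EM (dvdR 2 l).
  by right; left; apply/ndvd2_1D/dvdR_mulr.
by left; rewrite add0r; apply: ndvd2M.
Qed.

End TernaryForm.

Definition primitive_row n (v : 'rV[R]_n) := exists j, ~ dvdR 2 (v 0 j).

Lemma exists_primitive_row_odd_or_dvd4 n (G : 'M[R]_n) : G^T = G -> (3 <= n)%N ->
  exists2 v : 'rV_n, primitive_row v & ~ dvdR 2 (bform G v v) \/ dvdR 4 (bform G v v).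
Proof.
move=> G_sym n_ge3.
have [[i Gii_odd] | diag_even] := EM (exists i, ~ dvdR 2 (G i i)).
  exists (delta_mx 0 i); last by left; rewrite bform_delta.
  by exists i; rewrite mxE !eqxx; apply: ndvd2_1.
have Gii_even i : dvdR 2 (G i i) by apply: contrapT => Gii_odd; apply: diag_even; exists i.
have n_gt0 : (0 < n)%N by apply: leq_trans n_ge3.
have n_gt1 : (1 < n)%N by apply: leq_trans n_ge3.
pose i0 : 'I_n := Ordinal n_gt0; pose i1 : 'I_n := Ordinal n_gt1.
pose i2 : 'I_n := Ordinal n_ge3.
have [x [y [z [xyz_prim xyz_dvd4]]]] :=
  tern_even_dvd4 (G i0 i1) (G i0 i2) (G i1 i2) (Gii_even i0) (Gii_even i1) (Gii_even i2).
pose v := x *: delta_mx 0 i0 + y *: delta_mx 0 i1 + z *: delta_mx 0 i2 : 'rV[R]_n.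
exists v.
  have vE k : v 0 k = x * (k == i0)%:R + y * (k == i1)%:R + z * (k == i2)%:R.
    by rewrite !mxE eqxx.
  by case: xyz_prim => [|[|]] ?; [exists i0 | exists i1 | exists i2];
    rewrite vE /= ?mulr1 ?mulr0 ?addr0 ?add0r.
right; suff -> : bform G v v = tern_form (G i0 i0) (G i1 i1) (G i2 i2)
  (G i0 i1) (G i0 i2) (G i1 i2) x y z by [].
have Gsym a b : G a b = G b a by rewrite -{1}G_sym mxE.
rewrite !(bformDl, bformDr, bformZl, bformZr) !bform_delta /tern_form.
by rewrite (Gsym i1 i0) (Gsym i2 i0) (Gsym i2 i1); ring.
Qed.

Lemma prim_represents_diff_squares m (G : 'M[R]_(1 + m)) p q :
  G^T = G -> G 0 0 = p ^+ 2 - q ^+ 2 -> ~ dvdR 2 p \/ ~ dvdR 2 q ->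
  prim_represents G (orth (Hpow R m) (diag2 1 (-1))).
Proof.
move=> G_sym G00 pq_odd.
have /fin_all_exists[r Gr] i : exists y, dvdR 2 (G i i - y ^+ 2) by apply: exists_sqrt_mod2.
pose a : 'cV[R]_(1 + m) := \col_i (if i == 0 then p else r i).
pose c : 'cV[R]_(1 + m) := \col_i (if i == 0 then q else 0).
pose G' := G - (a *m a^T - c *m c^T).
have G'E i j : G' i j = G i j - (a i 0 * a j 0 - c i 0 * c j 0).
  by rewrite !mxE !big_ord1 !mxE.
have [C G'C] : exists C, G' = col_mx 0 1%:M *m C^T + C *m (col_mx 0 1%:M)^T.
  apply: exists_hyp_split => [| | i].
  - by rewrite /G' !linearB /= !trmx_mul !trmxK G_sym.
  - by rewrite G'E !mxE eqxx G00; ring.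
  rewrite G'E !mxE; case: eqP => [-> | _]; last by rewrite mulr0 subr0 -expr2.
  by rewrite G00; exists 0; ring.
apply: (prim_represents_hyp_cols (C := C) (a := a) (c := c)); first by rewrite -G'C subrK.
by rewrite !mxE eqxx; case: pq_odd => /ndvd2_unit; [left | right].
Qed.

Hypothesis R_neq_Z2 : not_Z2 R.

Lemma exists_unit_ndvd2_sqrD x : exists2 t, t \is a GRing.unit & ~ dvdR 2 (t ^+ 2 + x).
Proof.
have [x1_even|] := EM (dvdR 2 (1 + x)); last by exists 1; rewrite ?unitr1 ?expr1n.
have [t [t_odd t1_odd]] := R_neq_Z2; exists t; first exact: ndvd2_unit.
have t1_odd' : ~ dvdR 2 (t + 1).
  move=> t1_even; apply: t1_odd; have -> : t - 1 = (t + 1) - 2 * 1 by ring.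
  by apply: dvdRB t1_even _; exists 1.
have : ~ dvdR 2 ((t - 1) * (t + 1)) by apply: ndvd2M.
have -> : (t - 1) * (t + 1) = (t ^+ 2 + x) - (1 + x) by ring.
by move=> tx_odd tx_even; apply/tx_odd/dvdRB.
Qed.

Lemma exists_diff_squares x : ~ dvdR 2 x \/ dvdR 4 x ->
  exists p q, x = p ^+ 2 - q ^+ 2 /\ (~ dvdR 2 p \/ ~ dvdR 2 q).
Proof.
case=> [x_odd | [h ->]].
  have [t xt] := exists_sqrt_mod2 x.
  have t_unit := ndvd2_unit (ndvd2_sqr_congr xt x_odd).
  have [b xE] := xt.
  have [u bE] := unit_dvdR b t_unit.
  exists (t + u), u; split; first by rewrite -[x](subrK (t ^+ 2)) xE bE; ring.
  have [u_even|] := EM (dvdR 2 u); [left => tu_even | by right].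
  by case: (unit_ndvd2 t_unit); rewrite -(addrK u t); apply: dvdRB.
have [t t_unit th_odd] := exists_unit_ndvd2_sqrD h.
have [u hE] := unit_dvdR h t_unit; rewrite hE in th_odd *.
exists (t + u), (u - t); split; first by ring.
left => tu_even; apply: th_odd; have -> : t ^+ 2 + t * u = (t + u) * t by ring.
exact: dvdR_mulr.
Qed.

Lemma prim_n_universal_Hpow_diag2 n :
  (3 <= n)%N -> prim_n_universal n (orth (Hpow R n.-1) (diag2 1 (-1))).
Proof.
case: n => [//|m] n_ge3 G [G_sym _] /=.
have [v [j vj_odd] v_good] := exists_primitive_row_odd_or_dvd4 G_sym n_ge3.
have [P [Q [QP P0]]] := exists_basis_row0 (ndvd2_unit vj_odd).
apply: (prim_represents_basis_change QP).
have [p [q [pq pq_odd]]] := exists_diff_squares v_good.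
apply: (prim_represents_diff_squares (p := p) (q := q)) => //.
  by rewrite !trmx_mul trmxK G_sym mulmxA.
by rewrite mulmx_tr_diag P0.
Qed.

End TwoPrimeRing.

Theorem theorem5p3 (R : idomainType) :
  local_ring_of_integers_2prime R -> not_Z2 R ->
  forall n : nat, (3 <= n)%N ->
    prim_n_universal n (orth (Hpow R n.-1) (diag2 (1 : R) (-1))) /\
    u_star_eq R n (2 * n).
Proof.
move=> HR R_neq_Z2 n n_ge3.
have univ := prim_n_universal_Hpow_diag2 HR R_neq_Z2 n_ge3.
split=> //; split.
  case: n n_ge3 univ => [//|m] _ univ; rewrite mul2n doubleS -addn2.
  by exists (orth (Hpow R m) (diag2 1 (-1))); split; first exact: lattice_Hpow_diag2.
move=> k M M_lat M_univ; rewrite mul2n -addnn.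
by case: HR => two_neq0 two_nunit _ _ _; apply: prim_n_universal_rank M_lat M_univ.
Qed.
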